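(* Let $n\ge2$, $k\ge1$. Let $\overline C^{\circ}=\{f\in M:\langle f-r^{2k},g-r^{2k}\rangle\le1\ \forall g\in\overline C\}$ be the polar of $\overline C$ in $M$ with respect to the origin $r^{2k}$. Then $\overline C^{\circ}=-\overline C^{*}+2r^{2k}$.
   Context: $P_{n,2k}$: real forms of degree $2k$ in $n$ variables; $r^{2k}=(x_1^2+\dots+x_n^2)^k$; $\langle f,g\rangle=\int_{S^{n-1}}fg\,d\sigma$ with $\sigma$ the rotation-invariant probability measure on $S^{n-1}$. $M=\{f\in P_{n,2k}:\int f\,d\sigma=1\}$, $C$ the cone of nonnegative forms, $\overline C=C\cap M$, $C^*=\{f:\langle f,g\rangle\ge0\ \forall g\in C\}$, $\overline C^*=C^*\cap M$. *)

From HB Require Import structures.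
From mathcomp Require Import all_boot all_order all_algebra.
From mathcomp Require Import mpoly.
From mathcomp Require Import all_classical all_reals all_analysis.

Set Implicit Arguments.
Unset Strict Implicit.
Unset Printing Implicit Defensive.
Import Order.TTheory GRing.Theory Num.Theory.
Import numFieldNormedType.Exports.
Local Open Scope classical_set_scope.
Local Open Scope ring_scope.

Section Forms.
Variable R : realType.

Definition poly_n (n : nat) := mpoly.mpoly n R.

Definition ev (n : nat) (x : 'I_n -> R) (p : poly_n n) : R := mpoly.meval x p.

(* P_{n,2k}: forms (homogeneous polynomials, including 0) of degree 2k. *)
Definition P (n k : nat) : set (poly_n n) :=
  [set p | p \is mpoly.ishomog1 (2 * k) (mpoly.mpoly_mdeg__canonical__mpoly_Measure n)].
Arguments P : clear implicits.

Definition r2k (n k : nat) : poly_n n :=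
  (\sum_(i < n) (@mpoly.mpolyX n R (mpoly.mnm1 i)) ^+ 2) ^+ k.
Arguments r2k : clear implicits.

(* n-dimensional Lebesgue integral over R^n, as the iterated Lebesgue
   integral over R (Fubini); points of R^n are encoded as sequences. *)
Fixpoint iter_int (m : nat) (F : seq R -> R) : R :=
  match m with
  | 0 => F [::]
  | m'.+1 => Rintegral (@lebesgue_measure R) setT
               (fun t => iter_int m' (fun s => F (t :: s)))
  end.

Definition leb_int (n : nat) (F : ('I_n -> R) -> R) : R :=
  iter_int n (fun s => F (fun i => nth 0 s i)).

Definition sqnorm (n : nat) (x : 'I_n -> R) : R := \sum_(i < n) x i ^+ 2.

Definition ind_ball (n : nat) (x : 'I_n -> R) : R :=
  if sqnorm x <= 1 then 1 else 0.

(* Integral against sigma, the rotation-invariant probability measure on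
   S^{n-1}, realised as the normalised cone measure: sigma is the image of the
   uniform probability on the unit ball B under x |-> x/|x|, i.e.
   sigma(A) = vol({t a : a in A, 0 < t <= 1}) / vol(B). *)
Definition sph_int (n : nat) (h : ('I_n -> R) -> R) : R :=
  leb_int (fun x => ind_ball x * h (fun i => x i / Num.sqrt (sqnorm x)))
  / leb_int (@ind_ball n).

Definition inner (n : nat) (f g : poly_n n) : R :=
  sph_int (fun x => ev x f * ev x g).

Definition avg (n : nat) (f : poly_n n) : R := sph_int (fun x => ev x f).

Definition Mset (n k : nat) : set (poly_n n) := [set f | P n k f /\ avg f = 1].
Arguments Mset : clear implicits.

Definition Ccone (n k : nat) : set (poly_n n) :=
  [set f | P n k f /\ forall x : 'I_n -> R, 0 <= ev x f].
Arguments Ccone : clear implicits.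
Definition Cbar (n k : nat) : set (poly_n n) := Ccone n k `&` Mset n k.
Arguments Cbar : clear implicits.

Definition Cstar (n k : nat) : set (poly_n n) :=
  [set f | P n k f /\ forall g, Ccone n k g -> 0 <= inner f g].
Arguments Cstar : clear implicits.
Definition Cstarbar (n k : nat) : set (poly_n n) := Cstar n k `&` Mset n k.
Arguments Cstarbar : clear implicits.

Definition polar_Cbar (n k : nat) : set (poly_n n) :=
  [set f | Mset n k f /\
     forall g, Cbar n k g -> inner (f - r2k n k) (g - r2k n k) <= 1].
Arguments polar_Cbar : clear implicits.

End Forms.

(* Write L f for the sphere average of f.  Since r^{2k} = 1 on the sphere,
   <f, g> = L (f g), L (f r^{2k}) = L f for forms f, and L r^{2k} = 1.  Hence for
   f, g in M, <f - r^{2k}, g - r^{2k}> - 1 = L (f g) - 2 = - L ((2 r^{2k} - f) g), so f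
   lies in the polar of Cbar iff h = 2 r^{2k} - f pairs nonnegatively with Cbar.  This
   already forces h in C^*: for g in C and e > 0 the form g + e r^{2k} has positive mean,
   so it rescales into Cbar, and letting e -> 0 gives <h, g> >= 0.  Only linearity and
   positivity of L enter, so the duality holds for any positive linear functional on a
   commutative algebra that satisfies these three identities. *)

From HB Require Import structures.
From mathcomp Require Import all_boot all_order all_algebra.
From mathcomp Require Import mpoly.
From mathcomp Require Import all_classical all_reals all_analysis.
From mathcomp Require Import measurable_realfun.
From mathcomp Require Import ring.
Import Order.TTheory GRing.Theory Num.Theory.
Import numFieldNormedType.Exports.
Set Implicit Arguments.
Unset Strict Implicit.
Unset Printing Implicit Defensive.
Local Open Scope classical_set_scope.
Local Open Scope ring_scope.

Section PolarOfNormalizedCone.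
Variables (R : realFieldType) (A : comAlgType R).
Variables (ell : A -> R) (S : submodClosed A) (C : set A) (r : A).
Hypotheses (ellD : {morph ell : f g / f + g})
  (ellZ : forall a f, ell (a *: f) = a * ell f).
Hypotheses (C_sub : forall g, C g -> g \in S) (C_r : C r).
Hypotheses (C_add : forall g h, C g -> C h -> C (g + h)).
Hypotheses (C_scale : forall a g, 0 <= a -> C g -> C (a *: g)).
Hypothesis ell_ge0 : forall g, C g -> 0 <= ell g.
Hypotheses (ell_mulr : forall f, f \in S -> ell (f * r) = ell f) (ell_r : ell r = 1).

Definition normalized : set A := [set f | f \in S /\ ell f = 1].
Definition dual_cone : set A := [set f | f \in S /\ forall g, C g -> 0 <= ell (f * g)].
Definition polar (K : set A) : set A :=
  [set f | normalized f /\ forall g, K g -> ell ((f - r) * (g - r)) <= 1].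

Let S_r : r \in S. Proof. exact: C_sub. Qed.

Let S_N f : f \in S -> - f \in S.
Proof. by rewrite -scaleN1r; exact: rpredZ. Qed.

Let ellN f : ell (- f) = - ell f.
Proof. by rewrite -scaleN1r ellZ mulN1r. Qed.

Let ellB f g : ell (f - g) = ell f - ell g.
Proof. by rewrite ellD ellN. Qed.

Let ell_mull f : f \in S -> ell (r * f) = ell f.
Proof. by rewrite mulrC; exact: ell_mulr. Qed.

Lemma ell_shifted_product f g : f \in S -> g \in S ->
  ell ((f - r) * (g - r)) = ell (f * g) - ell f - ell g + 1.
Proof.
move=> Sf Sg; rewrite mulrBl !mulrBr !ellB ell_mulr // ell_mull // ell_mulr //.
by rewrite ell_r; ring.
Qed.

Lemma ell_reflected_product f g : g \in S ->
  ell ((r *+ 2 - f) * g) = ell g *+ 2 - ell (f * g).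
Proof. by move=> Sg; rewrite mulrBl ellB mulrnAl mulr2n ellD ell_mull. Qed.

Lemma polar_le1E f g : normalized f -> normalized g ->
  (ell ((f - r) * (g - r)) <= 1) = (0 <= ell ((r *+ 2 - f) * g)).
Proof.
move=> [Sf f1] [Sg g1].
rewrite ell_shifted_product // ell_reflected_product // f1 g1.
by rewrite -subr_ge0; congr (0 <= _); ring.
Qed.

Lemma dual_cone_normalized_test h : normalized h ->
  (forall g, (C `&` normalized) g -> 0 <= ell (h * g)) -> dual_cone h.
Proof.
move=> [Sh h1] hC; split => // g Cg.
apply/ler_addgt0Pr => e e0.
have mean_gt0 : 0 < ell g + e by rewrite ltr_wpDl ?ell_ge0.
pose g' := (ell g + e)^-1 *: (g + e *: r).
have Cg' : C g' by apply/C_scale/C_add/C_scale; rewrite ?invr_ge0 ?ltW.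
have g'1 : ell g' = 1 by rewrite ellZ ellD ellZ ell_r mulr1 mulVf ?gt_eqF.
have := hC g' (conj Cg' (conj (C_sub Cg') g'1)).
rewrite /g' -scalerAr ellZ mulrDr ellD -scalerAr ellZ ell_mulr // h1 mulr1.
by rewrite pmulr_rge0 ?invr_gt0.
Qed.

Theorem polar_normalized_cone :
  polar (C `&` normalized) = [set - h + r *+ 2 | h in dual_cone `&` normalized].
Proof.
apply/seteqP; split => f.
- move=> [[Sf f1] polf]; exists (r *+ 2 - f); last by rewrite opprB subrK.
  have Nh : normalized (r *+ 2 - f).
    split; first by apply/rpredD/S_N; rewrite ?rpredMn.
    by rewrite ellB ellD ell_r f1; ring.
  split => //; apply: dual_cone_normalized_test => // g [Cg Ng].
  by rewrite -polar_le1E ?polf.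
- move=> [h [[Sh dh] [_ h1]] <-].
  have Nf : normalized (- h + r *+ 2).
    split; first by apply/rpredD/rpredMn; rewrite ?S_N.
    by rewrite ellD ellN ellD ell_r h1; ring.
  split => // g [Cg Ng]; rewrite polar_le1E //.
  by rewrite opprD opprK addrC subrK dh.
Qed.

End PolarOfNormalizedCone.

Section UnitIntervalIntegrals.
Variable R : realType.
Local Notation leb := (@lebesgue_measure R).
Variables (f : R -> R) (C : R).
Hypotheses (mf : measurable_fun setT f) (fC : forall t, `|f t| <= C).
Hypothesis f0 : forall t, 1 < `|t| -> f t = 0.

Let I : set R := `[-1, 1]%classic.

Lemma integral_abs_le_unit_itv : (\int[leb]_x (`|f x|)%:E <= (C * 2)%:E)%E.
Proof.
have mI : measurable I by exact: measurable_itv.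
apply: (@le_trans _ _ (\int[leb]_x (C%:E * (\1_I x)%:E))%E).
  apply: ge0_le_integral => //.
  - by apply/measurable_EFinP; exact: measurableT_comp.
  - by apply: emeasurable_funM => //; apply/measurable_EFinP; exact: measurable_indic.
  - move=> x _; rewrite /= -EFinM lee_fin /indic.
    have [xI|xI] := boolP (x \in I); first by rewrite mulr1.
    rewrite mulr0 f0 ?normr0 //.
    by move: xI => /negP; rewrite /I inE /= in_itv /= -ler_norml => /negP; rewrite -ltNge.
have C0 : 0 <= C by apply: le_trans (fC 0).
rewrite ge0_integralZl_EFin //; last first.
  by apply/measurable_EFinP; exact: measurable_indic.
have leb_I : (lebesgue_measure I = 2%:E)%E.
  by rewrite lebesgue_measure_itv /= lte_fin gtrN // -EFinD opprK.
have -> : (\int[leb]_x (\1_I x)%:E = 2%:E)%E.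
  by rewrite integral_indic // setIT; exact: leb_I.
by rewrite -EFinM.
Qed.

Lemma integrable_unit_itv : leb.-integrable setT (EFin \o f).
Proof.
apply/integrableP; split; first exact/measurable_EFinP.
by apply: le_lt_trans integral_abs_le_unit_itv _; exact: ltry.
Qed.

Lemma Rintegral_unit_itv_bound : `|Rintegral leb setT f| <= C * 2.
Proof.
apply: le_trans (le_normr_Rintegral _ integrable_unit_itv) _ => //.
have abs_ge0 : (0 <= \int[leb]_x (`|f x|)%:E)%E.
  by apply: integral_ge0 => x _; rewrite lee_fin.
rewrite -[X in _ <= X]/(fine (C * 2)%:E) fine_le ?integral_abs_le_unit_itv //.
by rewrite ge0_fin_numE // (le_lt_trans integral_abs_le_unit_itv) ?ltry.
Qed.

End UnitIntervalIntegrals.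

Lemma measurable_Rintegral_param (R : realType) d (X : measurableType d)
    (K : X * R -> R) : measurable_fun setT K ->
  measurable_fun setT (fun x => Rintegral (@lebesgue_measure R) setT (fun t => K (x, t))).
Proof.
move=> mK.
have -> : (fun x => Rintegral (@lebesgue_measure R) setT (fun t => K (x, t))) =
    (fun x => fine (\int[lebesgue_measure]_t ((EFin \o K)^\+ (x, t)) -
                    \int[lebesgue_measure]_t ((EFin \o K)^\- (x, t))))%E.
  apply/funext => x; rewrite /Rintegral integralE.
  by congr (fine (_ - _)); apply: eq_integral => t _; rewrite ?funeposE ?funenegE.
apply: measurableT_comp => //; apply: emeasurable_funB.
- apply: (measurable_fun_fubini_tonelli_F (m2 := @lebesgue_measure R)).
    by apply: measurable_funepos; exact/measurable_EFinP.
  exact: funepos_ge0.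
- apply: (measurable_fun_fubini_tonelli_F (m2 := @lebesgue_measure R)).
    by apply: measurable_funeneg; exact/measurable_EFinP.
  exact: funeneg_ge0.
Qed.

Section IteratedIntegral.
Variable R : realType.
Local Notation leb := (@lebesgue_measure R).
Implicit Types (m : nat) (F G : seq R -> R).

Definition cube_supported m F :=
  forall s, size s = m -> has (fun t => 1 < `|t|) s -> F s = 0.

(* Under these conditions every slice is Lebesgue integrable, so [iter_int] is linear. *)
Definition cube_integrand m F := [/\ exists B, forall s, `|F s| <= B,
  cube_supported m F & measurable_fun setT (fun s : m.-tuple R => F s)].

Lemma iter_int_ext m F G : (forall s, size s = m -> F s = G s) ->
  iter_int m F = iter_int m G.
Proof.
elim: m F G => [|m IH] F G FG /=; first exact: FG.
congr Rintegral; apply/funext => t; apply: IH => s sm.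
by apply: FG; rewrite /= sm.
Qed.

Lemma iter_int0 m : iter_int m (fun _ : seq R => 0) = 0.
Proof. by elim: m => [|m IH] //=; rewrite IH Rintegral_cst // mul0r. Qed.

Lemma iter_int_ge0 m F : (forall s, 0 <= F s) -> 0 <= iter_int m F.
Proof.
elim: m F => [|m IH] F F0 //=.
by apply: Rintegral_ge0 => t _; exact: IH.
Qed.

Lemma cube_supported_slice m F t : cube_supported m.+1 F ->
  cube_supported m (fun s => F (t :: s)).
Proof. by move=> Fsupp s sm hs; apply: Fsupp; rewrite /= ?sm ?hs ?orbT. Qed.

Lemma iter_int_slice_out m F t : cube_supported m.+1 F -> 1 < `|t| ->
  iter_int m (fun s => F (t :: s)) = 0.
Proof.
move=> Fsupp t1; rewrite -(iter_int0 m); apply: iter_int_ext => s sm.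
by apply: Fsupp; rewrite /= ?sm ?t1.
Qed.

Lemma measurable_cons_uncurry m F :
  measurable_fun setT (fun s : m.+1.-tuple R => F s) ->
  measurable_fun setT (fun p : R * m.-tuple R => F (p.1 :: p.2)).
Proof.
move=> mF; apply: (measurableT_comp mF
  (g := fun p : R * m.-tuple R => [tuple of p.1 :: p.2])).
exact: measurable_cons.
Qed.

Lemma measurable_slice m F t :
  measurable_fun setT (fun s : m.+1.-tuple R => F s) ->
  measurable_fun setT (fun s : m.-tuple R => F (t :: s)).
Proof.
move=> /measurable_cons_uncurry mF.
apply: (measurableT_comp mF (g := fun s : m.-tuple R => (t, s))).
exact: measurable_fun_pair.
Qed.

Lemma measurable_iter_int m d (X : measurableType d) (H : X -> seq R -> R) :
  measurable_fun setT (fun p : X * m.-tuple R => H p.1 p.2) ->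
  measurable_fun setT (fun x => iter_int m (H x)).
Proof.
elim: m d X H => [|m IH] d X H mH /=.
  apply: (measurableT_comp mH (g := fun x => (x, [tuple]))).
  exact: measurable_fun_pair.
apply: (measurable_Rintegral_param (K := fun q => iter_int m (fun s => H q.1 (q.2 :: s)))).
apply: (IH _ _ (fun q s => H q.1 (q.2 :: s))).
apply: (measurableT_comp mH
  (g := fun p : (X * R) * m.-tuple R => (p.1.1, [tuple of p.1.2 :: p.2]))).
apply: measurable_fun_pair; first exact: measurableT_comp.
by apply: measurable_cons => //; exact: measurableT_comp.
Qed.

Lemma measurable_iter_int_slice m F :
  measurable_fun setT (fun s : m.+1.-tuple R => F s) ->
  measurable_fun setT (fun t => iter_int m (fun s => F (t :: s))).
Proof.
move=> /measurable_cons_uncurry mF.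
exact: (measurable_iter_int (H := fun t s => F (t :: s))).
Qed.

Lemma iter_int_bound m F B : (forall s, `|F s| <= B) -> cube_supported m F ->
  measurable_fun setT (fun s : m.-tuple R => F s) -> `|iter_int m F| <= B * 2 ^+ m.
Proof.
elim: m F => [|m IH] F FB Fsupp mF /=; first by rewrite expr0 mulr1.
rewrite exprS mulrCA mulrC.
apply: Rintegral_unit_itv_bound => [|t|t t1]; first exact: measurable_iter_int_slice.
- by apply: IH => //; [exact: cube_supported_slice | exact: measurable_slice].
- exact: iter_int_slice_out.
Qed.

Lemma cube_integrand_slice m F t : cube_integrand m.+1 F ->
  cube_integrand m (fun s => F (t :: s)).
Proof.
move=> [[B FB] Fsupp mF]; split; first by exists B.
- exact: cube_supported_slice.
- exact: measurable_slice.
Qed.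

Lemma integrable_iter_int_slice m F : cube_integrand m.+1 F ->
  leb.-integrable setT (EFin \o (fun t => iter_int m (fun s => F (t :: s)))).
Proof.
move=> [[B FB] Fsupp mF].
apply: (integrable_unit_itv (C := B * 2 ^+ m)) => [|t|t t1].
- exact: measurable_iter_int_slice.
- apply: iter_int_bound => //; [exact: cube_supported_slice | exact: measurable_slice].
- exact: iter_int_slice_out.
Qed.

Lemma cube_integrandD m F G : cube_integrand m F -> cube_integrand m G ->
  cube_integrand m (fun s => F s + G s).
Proof.
move=> [[B1 FB] Fsupp mF] [[B2 GB] Gsupp mG]; split.
- by exists (B1 + B2) => s; apply: le_trans (ler_normD _ _) (lerD (FB s) (GB s)).
- by move=> s sm hs; rewrite Fsupp ?Gsupp ?addr0.
- exact: measurable_funD.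
Qed.

Lemma cube_integrandZ m c F : cube_integrand m F -> cube_integrand m (fun s => c * F s).
Proof.
move=> [[B FB] Fsupp mF]; split.
- by exists (`|c| * B) => s; rewrite normrM ler_wpM2l.
- by move=> s sm hs; rewrite Fsupp ?mulr0.
- exact: measurable_funM.
Qed.

Lemma iter_intD m F G : cube_integrand m F -> cube_integrand m G ->
  iter_int m (fun s => F s + G s) = iter_int m F + iter_int m G.
Proof.
elim: m F G => [|m IH] F G iF iG //=.
rewrite (_ : (fun t => _) = fun t =>
    iter_int m (fun s => F (t :: s)) + iter_int m (fun s => G (t :: s))).
  by apply: RintegralD => //; exact: integrable_iter_int_slice.
by apply/funext => t; apply: IH; exact: cube_integrand_slice.
Qed.

Lemma iter_intZ m c F : cube_integrand m F ->
  iter_int m (fun s => c * F s) = c * iter_int m F.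
Proof.
elim: m F => [|m IH] F iF //=.
rewrite (_ : (fun t => _) = fun t => c * iter_int m (fun s => F (t :: s))).
  by apply: RintegralZl => //; exact: integrable_iter_int_slice.
by apply/funext => t; apply: IH; exact: cube_integrand_slice.
Qed.

Lemma iter_int_supp_origin m F :
  (forall s, size s = m.+1 -> has (fun t => t != 0) s -> F s = 0) -> iter_int m.+1 F = 0.
Proof.
elim: m F => [|m IH] F Fsupp.
  rewrite /= (_ : (fun t => F [:: t]) = (fun t => F [:: t]) \_ [set 0]).
    by rewrite -Rintegral_mkcond Rintegral_set1.
  apply/funext => t; rewrite /patch; case: ifPn => // t0.
  by rewrite Fsupp //= orbF; apply: contraNneq t0 => ->; rewrite mem_set.
rewrite /= (_ : (fun t => _) = fun _ => 0); first by rewrite Rintegral_cst // mul0r.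
apply/funext => t; apply: (IH (fun s => F (t :: s))) => s sm hs.
by apply: Fsupp; rewrite /= ?sm ?hs ?orbT.
Qed.

End IteratedIntegral.

Lemma meval0_dhomog (R : comRingType) n (mf : mpoly.Measure.type n) d
    (p : {mpoly R[n]}) :
  (0 < d)%N -> p \is d.-homog for mf -> p.@[fun _ => 0] = 0.
Proof.
move=> d0 homp; rewrite mevalE big_seq big1 // => m /(dhomog_mf homp) mfm.
have /existsP [i mi] : [exists i, m i != 0%N].
  apply/existsPn => m0; move: d0; rewrite -mfm (_ : m = 0%MM) ?mf0 //.
  by apply/mnmP => i; rewrite mnm0E; exact/eqP/negPn/m0.
by rewrite (bigD1 i) //= expr0n (negbTE mi) mul0r mulr0.
Qed.

Lemma measurable_inv (R : realType) : measurable_fun (setT : set R) GRing.inv.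
Proof.
have c0 : closed [set (0 : R)].
  by apply: compact_closed; [exact: Rhausdorff | exact: finite_compact].
have m0 := closed_measurable c0.
rewrite -(setvU [set 0]); apply/(measurable_funU _ (measurableC m0) m0); split.
  apply: open_continuous_measurable_fun; first exact: closed_openC.
  by move=> x; rewrite inE /= => /eqP x0; exact: inv_continuous.
move=> _ Y mY; have [Y0|Y0] := pselect (Y 0).
  rewrite (_ : _ `&` _ = [set 0]) //.
  by apply/seteqP; split => x /=; [case | move=> ->; rewrite invr0].
rewrite (_ : _ `&` _ = set0) //.
by apply/seteqP; split => x //= [-> /=]; rewrite invr0.
Qed.

Lemma measurable_meval (R : realType) n d (T : measurableType d) (f : 'I_n -> T -> R)
    (p : {mpoly R[n]}) :
  (forall i, measurable_fun setT (f i)) -> measurable_fun setT (fun t => p.@[fun i => f i t]).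
Proof.
move=> mf; under eq_fun => t do rewrite mevalE.
apply: measurable_sum => m; apply: measurable_funM => //.
by apply: measurable_prod => i _; exact: measurable_funX.
Qed.

Lemma meval_norm_le (R : realDomainType) n (y : 'I_n -> R) (p : {mpoly R[n]}) :
  (forall i, `|y i| <= 1) -> `|p.@[y]| <= \sum_(m <- msupp p) `|p@_m|.
Proof.
move=> y1; rewrite mevalE; apply: le_trans (ler_norm_sum _ _ _) _.
apply: ler_sum => m _; rewrite normrM ler_piMr // normr_prod.
by apply: prodr_ile1 => i _; rewrite normrX exprn_ge0 //= exprn_ile1.
Qed.

Section SphereAverage.
Variables (R : realType) (n : nat).
Implicit Types (p q : poly_n R n) (x : 'I_n -> R).

Definition coords (s : seq R) : 'I_n -> R := fun i => nth 0 s i.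

Definition radial_proj x : 'I_n -> R := fun i => x i / Num.sqrt (sqnorm x).

Definition cone_integrand p (s : seq R) : R :=
  ind_ball (coords s) * ev (radial_proj (coords s)) p.

Definition ball_volume : R := leb_int (@ind_ball R n).

Lemma avgE p : avg p = iter_int n (cone_integrand p) / ball_volume.
Proof. by []. Qed.

Lemma innerE p q : inner p q = avg (p * q).
Proof.
by rewrite /inner /avg; congr sph_int; apply/funext => x; rewrite /ev mevalM.
Qed.

Lemma sqnorm_ge0 x : 0 <= sqnorm x.
Proof. by apply: sumr_ge0 => i _; exact: sqr_ge0. Qed.

Lemma sqr_le_sqnorm x i : x i ^+ 2 <= sqnorm x.
Proof.
by rewrite /sqnorm (bigD1 i) //= lerDl; apply: sumr_ge0 => j _; exact: sqr_ge0.
Qed.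

Lemma radial_proj_norm_le1 x i : `|radial_proj x i| <= 1.
Proof.
rewrite /radial_proj; have [->|x0] := eqVneq (sqnorm x) 0.
  by rewrite sqrtr0 invr0 mulr0 normr0.
have sqrt_gt0 : 0 < Num.sqrt (sqnorm x) by rewrite sqrtr_gt0 lt_def x0 sqnorm_ge0.
rewrite normrM normfV (gtr0_norm sqrt_gt0) ler_pdivrMr // mul1r.
by rewrite -sqrtr_sqr ler_sqrt ?sqnorm_ge0 // sqr_le_sqnorm.
Qed.

Lemma ind_ball_ge0 x : 0 <= ind_ball x.
Proof. by rewrite /ind_ball; case: ifP. Qed.

Lemma ind_ball_norm_le1 x : `|ind_ball x| <= 1.
Proof. by rewrite /ind_ball; case: ifP; rewrite ?normr1 ?normr0. Qed.

Lemma ind_ball_cube_supported : cube_supported n (fun s => ind_ball (coords s)).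
Proof.
move=> s sn /(has_nthP 0) [j]; rewrite sn => jn s_j.
rewrite /ind_ball ifF //; apply/negbTE; rewrite -ltNge.
apply: lt_le_trans (sqr_le_sqnorm _ (Ordinal jn)).
by rewrite /coords /= -(ger0_norm (sqr_ge0 _)) normrX exprn_egt1.
Qed.

Lemma measurable_coords i : measurable_fun setT (fun s : n.-tuple R => coords s i).
Proof.
rewrite (_ : (fun s => _) = (fun s => tnth s i)); first exact: measurable_tnth.
by apply/funext => s; rewrite /coords (tnth_nth 0).
Qed.

Lemma measurable_sqnorm :
  measurable_fun setT (fun s : n.-tuple R => sqnorm (coords s)).
Proof.
by apply: measurable_sum => i; apply: measurable_funX; exact: measurable_coords.
Qed.

Lemma measurable_ind_ball :
  measurable_fun setT (fun s : n.-tuple R => ind_ball (coords s)).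
Proof.
apply: measurable_fun_ifT => //.
by apply: measurable_fun_ler => //; exact: measurable_sqnorm.
Qed.

Lemma measurable_cone_integrand p :
  measurable_fun setT (fun s : n.-tuple R => cone_integrand p s).
Proof.
apply: measurable_funM; first exact: measurable_ind_ball.
apply: measurable_meval => i; rewrite /radial_proj.
apply: measurable_funM; first exact: measurable_coords.
apply: (@measurableT_comp _ _ _ _ _ _ (@GRing.inv R)); first exact: measurable_inv.
apply: (measurableT_comp (continuous_measurable_fun (@sqrt_continuous R))).
exact: measurable_sqnorm.
Qed.

Lemma cube_integrand_ind_ball : cube_integrand n (fun s => ind_ball (coords s)).
Proof.
split; [by exists 1 => s; exact: ind_ball_norm_le1 | exact: ind_ball_cube_supported |].
exact: measurable_ind_ball.
Qed.

Lemma cube_integrand_cone p : cube_integrand n (cone_integrand p).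
Proof.
split; last exact: measurable_cone_integrand.
- exists (\sum_(m <- msupp p) `|p@_m|) => s; rewrite normrM -[X in _ <= X]mul1r.
  apply: ler_pM => //; first exact: ind_ball_norm_le1.
  by apply: meval_norm_le => i; exact: radial_proj_norm_le1.
- by move=> s sn hs; rewrite /cone_integrand ind_ball_cube_supported ?mul0r.
Qed.

Lemma ball_volume_ge0 : 0 <= ball_volume.
Proof. by apply: iter_int_ge0 => s; exact: ind_ball_ge0. Qed.

Lemma avgD : {morph @avg R n : p q / p + q}.
Proof.
move=> p q; rewrite !avgE -mulrDl -iter_intD; [|exact: cube_integrand_cone..].
by congr (iter_int _ _ / _); apply/funext => s; rewrite /cone_integrand /ev mevalD mulrDr.
Qed.

Lemma avgZ c p : avg (c *: p) = c * avg p.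
Proof.
rewrite !avgE mulrA -iter_intZ; last exact: cube_integrand_cone.
by congr (iter_int _ _ / _); apply/funext => s; rewrite /cone_integrand /ev mevalZ mulrCA.
Qed.

Lemma avg_ge0 p : (forall x, 0 <= ev x p) -> 0 <= avg p.
Proof.
move=> p0; rewrite avgE divr_ge0 ?ball_volume_ge0 //.
by apply: iter_int_ge0 => s; rewrite mulr_ge0 ?ind_ball_ge0.
Qed.

End SphereAverage.

Section SphereAverageOfForms.
Variables (R : realType) (n k : nat).
Hypothesis k_gt0 : (0 < k)%N.
Local Notation r := (@r2k R n k).
Implicit Types (f g : poly_n R n) (x : 'I_n -> R).

Definition form_space : submodClosed (poly_n R n) :=
  (mpoly.ishomog1_pred (2 * k) (mpoly.mpoly_mdeg__canonical__mpoly_Measure n) : {pred _}).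

Lemma ev_r2k x : ev x r = sqnorm x ^+ k.
Proof.
rewrite /ev /r2k rmorphXn raddf_sum; congr (_ ^+ _).
by apply: eq_bigr => i _; rewrite /= !expr2 mevalM mevalXU.
Qed.

Lemma r2k_in_Ccone : @Ccone R n k r.
Proof.
split=> [|x]; last by rewrite ev_r2k exprn_ge0 ?sqnorm_ge0.
apply: dhomogMn; apply: rpred_sum => i _.
by rewrite mpolyXn dhomogX; apply/eqP; rewrite -[LHS]/(mdeg _) mdegMn mdeg1.
Qed.

Lemma Ccone_add g h : @Ccone R n k g -> @Ccone R n k h -> @Ccone R n k (g + h).
Proof.
move=> [Pg g0] [Ph h0]; split; first by apply: rpredD.
by move=> x; rewrite /ev mevalD; exact: addr_ge0 (g0 x) (h0 x).
Qed.

Lemma Ccone_scale a g : 0 <= a -> @Ccone R n k g -> @Ccone R n k (a *: g).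
Proof.
move=> a0 [Pg g0]; split; first by apply: rpredZ.
by move=> x; rewrite /ev mevalZ; exact: mulr_ge0 a0 (g0 x).
Qed.

Lemma sqnorm_radial_proj x : sqnorm x != 0 -> sqnorm (radial_proj x) = 1.
Proof.
move=> x0; have x_gt0 : 0 < sqnorm x by rewrite lt_def x0 sqnorm_ge0.
rewrite /sqnorm /radial_proj.
under eq_bigr => i _ do rewrite exprMn exprVn sqr_sqrtr ?ltW //.
by rewrite -mulr_suml mulfV.
Qed.

Lemma cone_integrand_mulr f :
  f \in form_space -> cone_integrand (f * r) = cone_integrand f.
Proof.
move=> Pf; apply/funext => s; rewrite /cone_integrand /ev mevalM -/(ev _ r) ev_r2k.
have [x0|x0] := eqVneq (sqnorm (coords (n:=n) s)) 0; last first.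
  by rewrite sqnorm_radial_proj // expr1n mulr1.
(* the junk value [0^-1 = 0] sends the origin to itself *)
have -> : radial_proj (coords (n:=n) s) = fun _ => 0.
  by apply/funext => i; rewrite /radial_proj x0 sqrtr0 invr0 mulr0.
by rewrite (meval0_dhomog _ Pf) ?muln_gt0 // !mul0r mulr0.
Qed.

Lemma avg_mulr f : f \in form_space -> avg (f * r) = avg f.
Proof. by move=> Pf; rewrite !avgE cone_integrand_mulr. Qed.

Lemma avg_r2k : (0 < n)%N -> ball_volume R n != 0 -> avg r = 1.
Proof.
move=> n_gt0 V0.
pose D s := cone_integrand r s + -1 * ind_ball (coords (n:=n) s).
have D0 : iter_int n D = 0.
  have := @iter_int_supp_origin R n.-1 D; rewrite prednK //.
  apply=> s sn /(has_nthP 0) [j]; rewrite sn => jn sj0.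
  have x0 : sqnorm (coords (n:=n) s) != 0.
    by rewrite gt_eqF // (lt_le_trans _ (sqr_le_sqnorm _ (Ordinal jn))) ?exprn_even_gt0.
  by rewrite /D /cone_integrand ev_r2k sqnorm_radial_proj // expr1n mulr1 mulN1r subrr.
move: D0; rewrite /D iter_intD; last 2 first.
- exact: cube_integrand_cone.
- exact/cube_integrandZ/cube_integrand_ind_ball.
rewrite iter_intZ; last exact: cube_integrand_ind_ball.
by rewrite mulN1r => /eqP; rewrite subr_eq0 avgE => /eqP ->; exact: divff.
Qed.

Lemma Mset_eq0 : ball_volume R n = 0 -> @Mset R n k = set0.
Proof.
move=> V0; apply/seteqP; split => // f [_].
by rewrite avgE V0 invr0 mulr0 => /eqP; rewrite eq_sym oner_eq0.
Qed.

End SphereAverageOfForms.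

Theorem lemma5p1 (R : realType) (n k : nat) (hn : (2 <= n)%N) (hk : (1 <= k)%N) :
  @polar_Cbar R n k = [set - h + @r2k R n k *+ 2 | h in @Cstarbar R n k].
Proof.
(* [avg] divides by the volume of the ball, which is not shown to be nonzero *)
have [V0|V0] := eqVneq (ball_volume R n) 0.
  rewrite /polar_Cbar /Cstarbar (Mset_eq0 k V0).
  by apply/seteqP; split=> f; [case | case=> h [_ []]].
pose M := normalized (@avg R n) (form_space R n k).
have polarE : @polar_Cbar R n k =
    polar (@avg R n) (form_space R n k) (@r2k R n k) (@Ccone R n k `&` M).
  by apply/seteqP; split=> f [Mf polf]; split=> // g /polf; rewrite innerE.
have dualE : @Cstarbar R n k = dual_cone (@avg R n) (form_space R n k) (@Ccone R n k) `&` M.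
  apply/seteqP; split=> f [[Pf dualf] Mf];
    by do 2 split=> //; move=> g /dualf; rewrite innerE.
rewrite polarE dualE; apply: polar_normalized_cone.
- exact: avgD.
- exact: avgZ.
- by move=> g [].
- exact: r2k_in_Ccone.
- exact: Ccone_add.
- exact: Ccone_scale.
- by move=> g [_ g0]; exact: avg_ge0.
- exact: avg_mulr hk.
- exact: avg_r2k (ltnW hn) V0.
Qed.
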